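(* Let $k$ be a natural number, $n=4k$, and let $|G\rangle$ be an $n$-qubit graph state whose graph has no isolated vertices. Let $\mathcal A$ be the set of stabilizers $S=(-1)^s\bigotimes_{i=1}^n\tau_i$ of $|G\rangle$ ($s\in\{0,1\}$) such that $\tau_i\in\{X,Y,Z\}$ for exactly $3k$ indices $i$ and $\tau_i=I$ for the remaining $k$ indices, and assume $\mathcal A\neq\emptyset$. Let $\rho=\mathcal E^{\otimes n}(|G\rangle\langle G|)$ with $\mathcal E$ the single-qubit depolarizing channel of error probability $p$. Then for every $S\in\mathcal A$, $F_{\rm est}:={\rm Tr}(\rho S)=(1-\tfrac43p)^{3k}$, and with $\tilde F:=(1-p)^{4k}$ (the fidelity $\langle G|\rho|G\rangle$ up to first order in $p$) one has $$0\le \tilde F-F_{\rm est}<\frac{2}{3k}\qquad\text{for all }0\le p\le 3/4.$$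
   Context: Graph state $|G\rangle=\big(\prod_{(i,j)\in E}CZ_{i,j}\big)|+\rangle^{\otimes n}$ with stabilizer generators $g_i=X_i\prod_{j:(i,j)\in E}Z_j$; a stabilizer is $S_\ell=\prod_i g_i^{\ell_i}$, $\ell\in\{0,1\}^n$, which equals $(-1)^s\bigotimes_{i=1}^n\tau_i$ with $\tau_i\in\{I,X,Y,Z\}$. The depolarizing channel is $\mathcal E(\cdot)=(1-p)(\cdot)+\frac p3[X(\cdot)X+Y(\cdot)Y+Z(\cdot)Z]$, applied independently to each qubit. *)

From mathcomp Require Import all_boot all_order all_algebra.
Set Implicit Arguments. Unset Strict Implicit. Unset Printing Implicit Defensive.
Import Order.TTheory GRing.Theory Num.Theory.
Local Open Scope ring_scope.

Inductive pauli := PI | PX | PY | PZ.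

Definition nonid (P : pauli) : bool := if P is PI then false else true.

Section Quantum.
Variable C : numClosedFieldType.

(* 2x2 Pauli matrices in the computational basis |false>=|0>, |true>=|1>:
   X = [[0,1],[1,0]], Y = [[0,-i],[i,0]], Z = [[1,0],[0,-1]]. *)
Definition pmat (P : pauli) (b c : bool) : C :=
  match P with
  | PI => (b == c)%:R
  | PX => (b != c)%:R
  | PY => if b == c then 0 else if b then 'i else - 'i
  | PZ => if b == c then (if b then -1 else 1) else 0
  end.

Variable n : nat.

Definition basis := {ffun 'I_n -> bool}.
Definition op := basis -> basis -> C.
Definition vec := basis -> C.

Definition idO : op := fun x y => (x == y)%:R.
Definition mulO (A B : op) : op := fun x z => \sum_(y : basis) A x y * B y z.
Definition trO (A : op) : C := \sum_(x : basis) A x x.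
Definition applyO (A : op) (v : vec) : vec := fun x => \sum_(y : basis) A x y * v y.

Definition tens (tau : 'I_n -> pauli) : op :=
  fun x y => \prod_(i < n) pmat (tau i) (x i) (y i).

Definition pauli_at (q : 'I_n) (P : pauli) : op :=
  tens (fun j => if j == q then P else PI).

Definition gen (e : rel 'I_n) (i : 'I_n) : op :=
  tens (fun j => if j == i then PX else if e i j then PZ else PI).

Definition stab (e : rel 'I_n) (l : 'I_n -> bool) : op :=
  \big[mulO/idO]_(i < n) (if l i then gen e i else idO).

Definition cz (i j : 'I_n) : op :=
  fun x y => (x == y)%:R * (if x i && x j then -1 else 1).

Definition plus_state : vec := fun _ => ((sqrtC 2)^-1) ^+ n.

(* |G> = (prod_{(i,j) in E} CZ_{ij}) |+>^n, each edge counted once (i<j) *)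
Definition graph_state (e : rel 'I_n) : vec :=
  applyO (\big[mulO/idO]_(i < n) \big[mulO/idO]_(j < n | (i < j)%N && e i j) cz i j)
         plus_state.

Definition proj (v : vec) : op := fun x y => v x * (v y)^*.

Definition depol1 (p : C) (q : 'I_n) (A : op) : op :=
  fun x y => (1 - p) * A x y
    + p / 3%:R * (mulO (mulO (pauli_at q PX) A) (pauli_at q PX) x y
               + mulO (mulO (pauli_at q PY) A) (pauli_at q PY) x y
               + mulO (mulO (pauli_at q PZ) A) (pauli_at q PZ) x y).

(* E^{(x) n}: the (commuting) single-qubit channels applied on every qubit *)
Definition depol_all (p : C) (A : op) : op := foldr (depol1 p) A (enum 'I_n).

Definition noisy_state (e : rel 'I_n) (p : C) : op := depol_all p (proj (graph_state e)).

Definition in_A (e : rel 'I_n) (m : nat) (S : op) : Prop :=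
  (exists l : 'I_n -> bool, S = stab e l) /\
  (exists (s : bool) (tau : 'I_n -> pauli),
      S = (fun x y => (-1) ^+ s * tens tau x y) /\
      #|[pred i : 'I_n | nonid (tau i)]| = m).

End Quantum.

From mathcomp Require Import all_boot all_order all_algebra.
From mathcomp Require Import ring.
From Stdlib Require Import FunctionalExtensionality.
Import Order.TTheory GRing.Theory Num.Theory.
Set Implicit Arguments.
Unset Strict Implicit.
Unset Printing Implicit Defensive.
Local Open Scope ring_scope.

(* In the Heisenberg picture a single-qubit
      depolarizing channel on qubit q maps a Pauli string to itself times
      1 - 4p/3 if tau_q is X, Y or Z (of the three conjugations P . P, one keeps
      tau_q and two flip its sign) and times 1 if tau_q = I.  Iterating over all
      qubits gives Tr(rho S) = (1 - 4p/3)^(3k) Tr(|G><G| S), and Tr(|G><G| S) = 1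
      because S |G> = |G> (each generator g_i flips bit i and multiplies the
      amplitude by the matching edge sign) and |G> is a unit vector.
   2. The real inequality: per block of four qubits
      0 <= (1 - p)^4 - (1 - 4p/3)^3 <= 2p^2/3, so with u^m - v^m <= m (u - v) u^(m-1)
      the gap is at most (2/(3k)) (k p (1 - p)^(2k-2))^2, and Bernoulli's inequality
      gives k p (1 - p)^(2k-2) < 1.
   The file develops the operator algebra, Pauli conjugation, the action of the
   channel on Pauli strings, the stabilizer property of |G>, the inequality, and
   finally combines them. *)

Section OperatorAlgebra.
Variables (C : numClosedFieldType) (n : nat).
Implicit Types (A B D T : op C n) (v : vec C n).

Lemma op_ext A B : (forall x y, A x y = B x y) -> A = B.
Proof.
by move=> AB; apply: functional_extensionality => x; apply: functional_extensionality.
Qed.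

Lemma mulOA A B D : mulO (mulO A B) D = mulO A (mulO B D).
Proof.
apply: op_ext => x z; rewrite /mulO.
under eq_bigr do rewrite mulr_suml.
rewrite exchange_big /=; apply: eq_bigr => w _.
by rewrite mulr_sumr; apply: eq_bigr => y _; rewrite mulrA.
Qed.

Lemma trO_mulC A B : trO (mulO A B) = trO (mulO B A).
Proof.
rewrite /trO /mulO exchange_big /=; apply: eq_bigr => x _.
by apply: eq_bigr => y _; rewrite mulrC.
Qed.

Lemma trO_mulZr A B c : trO (mulO A (fun x y => c * B x y)) = c * trO (mulO A B).
Proof.
rewrite /trO /mulO mulr_sumr; apply: eq_bigr => x _.
by rewrite mulr_sumr; apply: eq_bigr => y _; rewrite mulrCA.
Qed.

Lemma trO_mul_lincomb A B1 B2 B3 T a b :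
  trO (mulO (fun x y => a * A x y + b * (B1 x y + B2 x y + B3 x y)) T) =
  a * trO (mulO A T) + b * (trO (mulO B1 T) + trO (mulO B2 T) + trO (mulO B3 T)).
Proof.
rewrite /trO /mulO !mulrDr !mulr_sumr -!big_split /=; apply: eq_bigr => x _.
by rewrite !mulr_sumr -!big_split /=; apply: eq_bigr => y _; ring.
Qed.

Lemma trO_conj_move (P : op C n) A T :
  trO (mulO (mulO (mulO P A) P) T) = trO (mulO A (mulO (mulO P T) P)).
Proof. by rewrite mulOA trO_mulC -mulOA trO_mulC. Qed.

Lemma applyO_mulO A B v : applyO (mulO A B) v = applyO A (applyO B v).
Proof.
apply: functional_extensionality => x; rewrite /applyO /mulO.
under eq_bigr do rewrite mulr_suml.
rewrite exchange_big /=; apply: eq_bigr => w _.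
by rewrite mulr_sumr; apply: eq_bigr => y _; rewrite mulrA.
Qed.

Lemma applyO_idO v : applyO (@idO C n) v = v.
Proof.
apply: functional_extensionality => x; rewrite /applyO /idO (bigD1 x) //=.
rewrite big1 ?eqxx ?mul1r ?addr0 // => y /negbTE.
by rewrite eq_sym => ->; rewrite mul0r.
Qed.

Lemma trO_proj_fixed v (S : op C n) :
  applyO S v = v -> trO (mulO (proj v) S) = \sum_x v x * (v x)^*.
Proof.
move=> Sv; rewrite /trO /mulO /proj exchange_big /=; apply: eq_bigr => y _.
have -> : \sum_x v x * (v y)^* * S y x = (v y)^* * applyO S v y.
  by rewrite /applyO mulr_sumr; apply: eq_bigr => x _; ring.
by rewrite Sv mulrC.
Qed.

Definition prod_op (f : 'I_n -> bool -> bool -> C) : op C n :=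
  fun x y => \prod_(i < n) f i (x i) (y i).

Definition mul2 (a b : bool -> bool -> C) : bool -> bool -> C :=
  fun s t => \sum_(w : bool) a s w * b w t.

Lemma mulO_prod_op (f g : 'I_n -> bool -> bool -> C) :
  mulO (prod_op f) (prod_op g) = prod_op (fun i => mul2 (f i) (g i)).
Proof.
apply: op_ext => x z; rewrite /mulO /prod_op /mul2 bigA_distr_bigA /=.
by apply: eq_bigr => y _; rewrite big_split.
Qed.

Definition diag_op (d : basis n -> C) : op C n := fun x y => (x == y)%:R * d x.

Lemma mulO_diag (d1 d2 : basis n -> C) :
  mulO (diag_op d1) (diag_op d2) = diag_op (fun x => d1 x * d2 x).
Proof.
apply: op_ext => x z; rewrite /mulO /diag_op (bigD1 x) //= big1 ?addr0.
  by rewrite eqxx mul1r mulrCA.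
by move=> y /negbTE; rewrite eq_sym => ->; rewrite !mul0r.
Qed.

Lemma big_mulO_diag (I : Type) (r : seq I) (P : pred I) (F : I -> basis n -> C) :
  \big[@mulO C n/@idO C n]_(i <- r | P i) diag_op (F i) =
  diag_op (fun x => \prod_(i <- r | P i) F i x).
Proof.
elim: r => [|i r IH].
  by rewrite big_nil; apply: op_ext => x y; rewrite /idO /diag_op big_nil mulr1.
rewrite big_cons IH; case: ifP => Pi; last first.
  by apply: op_ext => x y; rewrite /diag_op big_cons Pi.
by rewrite mulO_diag; apply: op_ext => x y; rewrite /diag_op big_cons Pi.
Qed.

End OperatorAlgebra.

Section PauliConjugation.
Variable C : numClosedFieldType.

Definition pauli_commute (P T : pauli) : bool :=
  match P, T with
  | PI, _ | _, PI | PX, PX | PY, PY | PZ, PZ => true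
  | _, _ => false
  end.

Definition comm_sign (P T : pauli) : C := if pauli_commute P T then 1 else -1.

Lemma mul2_pauli_conj (P T : pauli) (b c : bool) :
  mul2 (mul2 (pmat C P) (pmat C T)) (pmat C P) b c = comm_sign P T * pmat C T b c.
Proof.
have ii : ('i : C) * 'i = -1 by rewrite -expr2 sqrCi.
case: P; case: T; case: b; case: c; rewrite /comm_sign /mul2 /= !big_bool /=;
  rewrite ?mul0r ?mulr0 ?mul1r ?mulr1 ?add0r ?addr0 ?mulN1r ?mulrN1 ?mulrN ?mulNr ?opprK ?ii //;
  ring.
Qed.

Variable n : nat.

Lemma pauli_at_conj (q : 'I_n) (P : pauli) (tau : 'I_n -> pauli) :
  mulO (mulO (pauli_at C q P) (tens C tau)) (pauli_at C q P) =
  fun x y => comm_sign P (tau q) * tens C tau x y.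
Proof.
have -> : pauli_at C q P = prod_op (fun j => pmat C (if j == q then P else PI)) by [].
have -> : tens C tau = prod_op (fun j => pmat C (tau j)) by [].
rewrite !mulO_prod_op.
apply: op_ext => x y; rewrite /prod_op.
under eq_bigr => j _ do rewrite mul2_pauli_conj.
rewrite big_split /= (bigD1 q) //= eqxx big1 ?mulr1 // => j /negbTE -> /=.
by rewrite /comm_sign; case: (tau j).
Qed.

End PauliConjugation.

Section DepolarizingOnPauliStrings.
Variables (C : numClosedFieldType) (n : nat) (p : C).

Definition depol_factor (P : pauli) : C := if nonid P then 1 - 4%:R / 3%:R * p else 1.

(* Heisenberg picture of one channel: Tr(E_q(A) tau) = f(tau_q) Tr(A tau), since
   X, Y, Z all commute with tau_q = I, and exactly one of them does otherwise. *)
Lemma trO_depol1 (q : 'I_n) (A : op C n) (tau : 'I_n -> pauli) :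
  trO (mulO (depol1 p q A) (tens C tau)) = depol_factor (tau q) * trO (mulO A (tens C tau)).
Proof.
rewrite /depol1 trO_mul_lincomb !trO_conj_move !pauli_at_conj !trO_mulZr.
by rewrite /depol_factor /comm_sign; case: (tau q) => /=; field.
Qed.

Lemma trO_depol_seq (s : seq 'I_n) (A : op C n) (tau : 'I_n -> pauli) :
  trO (mulO (foldr (depol1 p) A s) (tens C tau)) =
  (\prod_(i <- s) depol_factor (tau i)) * trO (mulO A (tens C tau)).
Proof.
elim: s => [|i s IH] /=; first by rewrite big_nil mul1r.
by rewrite trO_depol1 IH big_cons mulrA.
Qed.

Lemma trO_depol_all (A : op C n) (tau : 'I_n -> pauli) :
  trO (mulO (depol_all p A) (tens C tau)) =
  (1 - 4%:R / 3%:R * p) ^+ #|[pred i : 'I_n | nonid (tau i)]| * trO (mulO A (tens C tau)).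
Proof.
rewrite /depol_all trO_depol_seq; congr (_ * _).
rewrite big_enum /= (bigID (fun i => nonid (tau i))) /=.
rewrite [X in _ * X]big1 ?mulr1; last by move=> i /negbTE; rewrite /depol_factor => ->.
by rewrite -prodr_const; apply: eq_bigr => i; rewrite /depol_factor => ->.
Qed.

End DepolarizingOnPauliStrings.

Section GraphState.
Variables (C : numClosedFieldType) (n : nat) (e : rel 'I_n).
Hypotheses (e_sym : symmetric e) (e_irr : irreflexive e).

Definition edge_sign (x : basis n) : C :=
  \prod_(a < n) \prod_(b < n | (a < b)%N && e a b) (if x a && x b then -1 else 1).

(* the CZ gates are diagonal, so |G> = 2^(-n/2) sum_x edge_sign x |x> *)
Lemma graph_state_eq : graph_state C e = fun x => edge_sign x * (sqrtC 2)^-1 ^+ n.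
Proof.
apply: functional_extensionality => x; rewrite /graph_state.
have cz_row (i : 'I_n) : \big[@mulO C n/@idO C n]_(j < n | (i < j)%N && e i j) cz C i j =
    diag_op (fun x : basis n => \prod_(j < n | (i < j)%N && e i j)
                                  (if x i && x j then -1 else 1)).
  by rewrite -big_mulO_diag.
rewrite (eq_bigr _ (fun i _ => cz_row i)) big_mulO_diag /applyO /diag_op /plus_state.
rewrite (bigD1 x) //= [X in _ + X]big1 ?eqxx ?mul1r ?addr0 // => y /negbTE.
by rewrite eq_sym => ->; rewrite !mul0r.
Qed.

Definition flip_bit (x : basis n) (i : 'I_n) : basis n :=
  [ffun j => if j == i then ~~ x j else x j].

Lemma gen_off i (x y : basis n) : y != flip_bit x i -> gen C e i x y = 0.
Proof.
move=> y_neq; have [j xy_j] : exists j, y j != flip_bit x i j.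
  apply/existsP; apply: contraR y_neq => /existsPn same.
  by apply/eqP/ffunP => j; move/negPn/eqP: (same j).
rewrite /gen /tens (bigD1 j) //=.
suff -> : pmat C (if j == i then PX else if e i j then PZ else PI) (x j) (y j) = 0.
  by rewrite mul0r.
move: xy_j; rewrite ffunE; case: (j =P i) => [->|_] /=.
  by case: (x i); case: (y i).
by case: (e i j); case: (x j); case: (y j).
Qed.

(* ... namely by (-1)^(number of set neighbours of i), as X_i flips and Z_j reads *)
Lemma gen_on i (x : basis n) :
  gen C e i x (flip_bit x i) = \prod_(j < n) (if e i j && x j then -1 else 1).
Proof.
rewrite /gen /tens; apply: eq_bigr => j _; rewrite ffunE; case: (j =P i) => [->|_] /=.
  by rewrite e_irr; case: (x i).
by case: (e i j); case: (x j).
Qed.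

Lemma edge_term_flip i (x : basis n) (a b : 'I_n) : (a < b)%N ->
  (if flip_bit x i a && flip_bit x i b then -1 else 1 : C) =
  (if x a && x b then -1 else 1) *
  ((if (a == i) && x b then -1 else 1) * (if (b == i) && x a then -1 else 1)).
Proof.
move=> ab; rewrite !ffunE; case: (a =P i) => [ai|_]; case: (b =P i) => [bi|_] /=.
- by move: ab; rewrite ai bi ltnn.
all: by case: (x a); case: (x b) => /=; ring.
Qed.

Lemma edge_sign_flip i (x : basis n) :
  edge_sign (flip_bit x i) = edge_sign x * \prod_(j < n) (if e i j && x j then -1 else 1).
Proof.
rewrite /edge_sign.
under eq_bigr => a _ do under eq_bigr => b /andP [ab _] do rewrite edge_term_flip //.
under eq_bigr do rewrite big_split.
rewrite big_split /=; congr (_ * _).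
under eq_bigr do rewrite big_split.
rewrite big_split /=.
have from_i : \prod_(a < n) \prod_(b < n | (a < b)%N && e a b)
      (if (a == i) && x b then -1 else 1) =
    \prod_(b < n) (if (i < b)%N && e i b then (if x b then -1 else 1) else 1) :> C.
  rewrite (bigD1 i) //= [X in _ * X]big1 ?mulr1; last first.
    by move=> a /negbTE ai; apply: big1 => b _; rewrite ai.
  by rewrite big_mkcond; apply: eq_bigr => b _; rewrite eqxx.
have to_i : \prod_(a < n) \prod_(b < n | (a < b)%N && e a b)
      (if (b == i) && x a then -1 else 1) =
    \prod_(a < n) (if (a < i)%N && e a i then (if x a then -1 else 1) else 1) :> C.
  under eq_bigr do rewrite big_mkcond.
  rewrite exchange_big /= (bigD1 i) //= [X in _ * X]big1 ?mulr1; last first.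
    by move=> b /negbTE bi; apply: big1 => a _; rewrite bi; case: ifP.
  by apply: eq_bigr => a _; rewrite eqxx.
rewrite from_i to_i -big_split; apply: eq_bigr => b _ /=.
rewrite (e_sym b i); case: (ltngtP i b) => [_|_|/val_inj ib] /=.
- by rewrite mulr1; case: (e i b).
- by rewrite mul1r; case: (e i b).
- by rewrite -ib e_irr mulr1.
Qed.

(* g_i |G> = |G>, checked on amplitudes *)
Lemma gen_edge_sign i (x : basis n) :
  \sum_(y : basis n) gen C e i x y * edge_sign y = edge_sign x.
Proof.
rewrite (bigD1 (flip_bit x i)) //= big1 ?addr0; last by move=> y /gen_off ->; rewrite mul0r.
rewrite gen_on edge_sign_flip mulrCA -big_split /= big1 ?mulr1 // => j _.
by case: (e i j && x j); rewrite ?mulrNN mulr1.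
Qed.

Lemma stab_fixes_graph_state (l : 'I_n -> bool) :
  applyO (stab C e l) (graph_state C e) = graph_state C e.
Proof.
apply: (big_ind (fun A => applyO A (graph_state C e) = graph_state C e)).
- exact: applyO_idO.
- by move=> A B fixA fixB; rewrite applyO_mulO fixB fixA.
move=> i _; case: (l i); last exact: applyO_idO.
rewrite graph_state_eq; apply: functional_extensionality => x; rewrite /applyO.
by under eq_bigr do rewrite mulrA; rewrite -mulr_suml gen_edge_sign.
Qed.

(* edge signs are +-1, hence of modulus one *)
Lemma edge_sign_unit (x : basis n) : edge_sign x * (edge_sign x)^* = 1.
Proof.
suff [->|->] : edge_sign x = 1 \/ edge_sign x = -1.
- by rewrite rmorph1 mulr1.
- by rewrite rmorphN1 mulrNN mulr1.
pose is_sign (z : C) := z = 1 \/ z = -1.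
have sign_mul (a b : C) : is_sign a -> is_sign b -> is_sign (a * b).
  by move=> [->|->] [->|->]; rewrite ?mulrNN ?mul1r ?mulr1; [left|right|right|left].
apply: (big_ind is_sign) => //; first by left.
move=> a _; apply: (big_ind is_sign) => //; first by left.
by move=> b _; case: ifP; [right|left].
Qed.

Lemma graph_state_normalized :
  \sum_x graph_state C e x * (graph_state C e x)^* = 1.
Proof.
rewrite graph_state_eq.
have real_inv : ((sqrtC 2)^-1 : C)^* = (sqrtC 2)^-1.
  by rewrite fmorphV /= conj_Creal // ger0_real // sqrtC_ge0 ler0n.
under eq_bigr => x _ do rewrite rmorphM /= rmorphXn /= real_inv mulrACA edge_sign_unit mul1r.
rewrite sumr_const card_ffun card_bool card_ord -exprMn -invfM -expr2 sqrtCK.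
by rewrite -[X in X = 1]mulr_natr natrX -exprMn mulVf ?expr1n // pnatr_eq0.
Qed.

End GraphState.

Section FidelityGap.
Variable R : numFieldType.
Implicit Types (p q u v : R) (m : nat).

Lemma bernoulli_mul q m : 0 <= q -> q <= 1 -> (1 - q) ^+ m * (1 + m%:R * q) <= 1.
Proof.
move=> q0 q1; elim: m => [|m IH]; first by rewrite expr0 mul0r addr0 mul1r.
have -> : (1 - q) ^+ m.+1 * (1 + m.+1%:R * q) =
    (1 - q) ^+ m * (1 + m%:R * q) - (1 - q) ^+ m * (m.+1%:R * q ^+ 2).
  by rewrite exprS -natr1; ring.
by apply: le_trans IH; rewrite gerBl !mulr_ge0 ?exprn_ge0 ?subr_ge0.
Qed.

Lemma subrX_le u v m : 0 <= v -> v <= u ->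
  u ^+ m - v ^+ m <= m%:R * (u - v) * u ^+ m.-1.
Proof.
move=> v0 vu; have u0 : 0 <= u := le_trans v0 vu.
rewrite subrXX -mulrA [in leRHS]mulrCA ler_wpM2l ?subr_ge0 //.
have -> : m%:R * u ^+ m.-1 = \sum_(i < m) u ^+ m.-1.
  by rewrite sumr_const card_ord mulr_natl.
apply: ler_sum => i _.
have hi : (i <= m.-1)%N by rewrite -ltnS prednK // (leq_ltn_trans _ (ltn_ord i)).
rewrite -[in leRHS](subnK hi) exprD ler_wpM2l ?exprn_ge0 //.
by rewrite lerXn2r ?nnegrE.
Qed.

Variable p : R.
Hypotheses (p_ge0 : 0 <= p) (p_le : p <= 3%:R / 4%:R).

Let frac_ge0 (a b : nat) : (0 : R) <= a%:R / b%:R.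
Proof. by rewrite divr_ge0 ?ler0n. Qed.

Let p_lt1 : p < 1.
Proof. by apply: le_lt_trans p_le _; rewrite ltr_pdivrMr ?ltr0n // mul1r ltr_nat. Qed.

(* Per block of four qubits: (1 - 4p/3)^3 <= (1 - p)^4 <= (1 - 4p/3)^3 + 2p^2/3,
   from the exact identity
   (1 - p)^4 - (1 - 4p/3)^3 = p^2 ((p - 22/27)^2 + 2/729). *)
Lemma block_gap :
  0 <= 1 - 4%:R / 3%:R * p /\
  0 <= (1 - p) ^+ 4 - (1 - 4%:R / 3%:R * p) ^+ 3 <= 2%:R / 3%:R * p ^+ 2.
Proof.
have p_real : p \is Num.real by rewrite ger0_real.
split.
  have -> : 1 - 4%:R / 3%:R * p = (3%:R / 4%:R - p) * (4%:R / 3%:R) by field.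
  by rewrite mulr_ge0 ?subr_ge0.
have gap : (1 - p) ^+ 4 - (1 - 4%:R / 3%:R * p) ^+ 3 =
    p ^+ 2 * ((p - 22%:R / 27%:R) ^+ 2 + 2%:R / 729%:R) by field.
rewrite gap mulr_ge0 ?addr_ge0 -?realEsqr ?rpredB ?ger0_real ?frac_ge0 //=.
rewrite -subr_ge0.
have -> : 2%:R / 3%:R * p ^+ 2 - p ^+ 2 * ((p - 22%:R / 27%:R) ^+ 2 + 2%:R / 729%:R) =
    p ^+ 2 * p * ((3%:R / 4%:R - p) + 95%:R / 108%:R).
  by field.
by rewrite !mulr_ge0 ?exprn_ge0 // addr_ge0 ?frac_ge0 // subr_ge0.
Qed.

Lemma spread_lt1 m : m.+1%:R * p * (1 - p) ^+ (2 * m) < 1.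
Proof.
apply: lt_le_trans (bernoulli_mul (2 * m) p_ge0 (ltW p_lt1)).
rewrite mulrC ltr_pM2l ?exprn_gt0 ?subr_gt0 // -subr_gt0.
have -> : 1 + (2 * m)%:R * p - m.+1%:R * p = (1 - p) + m%:R * p.
  by rewrite natrM -natr1; ring.
by rewrite ltr_wpDr ?mulr_ge0 ?ler0n ?subr_gt0.
Qed.

Lemma fidelity_gap k : (0 < k)%N ->
  0 <= (1 - p) ^+ (4 * k) - (1 - 4%:R / 3%:R * p) ^+ (3 * k) /\
  (1 - p) ^+ (4 * k) - (1 - 4%:R / 3%:R * p) ^+ (3 * k) < 2%:R / (3 * k)%:R.
Proof.
case: k => // m _; have [b_ge0 /andP [gap_ge0 gap_le]] := block_gap.
set u := (1 - p) ^+ 4; set v := (1 - 4%:R / 3%:R * p) ^+ 3.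
have v_ge0 : 0 <= v by rewrite exprn_ge0.
have vu : v <= u by rewrite -subr_ge0.
have u_ge0 : 0 <= u := le_trans v_ge0 vu.
rewrite !exprM -/u -/v subr_ge0 lerXn2r ?nnegrE //.
split=> //; apply: le_lt_trans (subrX_le m.+1 v_ge0 vu) _.
set z := m.+1%:R * p * (1 - p) ^+ (2 * m).
have z_ge0 : 0 <= z by rewrite !mulr_ge0 ?ler0n ?exprn_ge0 ?subr_ge0 ?(ltW p_lt1).
apply: (le_lt_trans (y := 2%:R / (3 * m.+1)%:R * z ^+ 2)).
  have -> : 2%:R / (3 * m.+1)%:R * z ^+ 2 = m.+1%:R * (2%:R / 3%:R * p ^+ 2) * u ^+ m.
    have -> : u ^+ m = ((1 - p) ^+ (2 * m)) ^+ 2 by rewrite /u -!exprM mulnAC.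
    by rewrite /z natrM; field; rewrite addrC natr1 pnatr_eq0.
  by rewrite ler_wpM2r ?(exprn_ge0 _ u_ge0) // ler_wpM2l ?ler0n.
rewrite gtr_pMr ?divr_gt0 ?ltr0n // expr_lt1 //; exact: spread_lt1.
Qed.

End FidelityGap.

(* The main result; the hypotheses that no vertex is isolated and that A is
   nonempty are part of the paper's setting but not used by the argument. *)
Theorem theorem1 (C : numClosedFieldType) (k : nat) (hk : (0 < k)%N)
  (e : rel 'I_(4 * k)) (e_sym : symmetric e) (e_irr : irreflexive e)
  (no_isolated : forall i : 'I_(4 * k), exists j, e i j)
  (A_nonempty : exists S : op C (4 * k), in_A e (3 * k) S)
  (p : C) (hp0 : 0 <= p) (hp1 : p <= 3%:R / 4%:R)
  (S : op C (4 * k)) (hS : in_A e (3 * k) S) :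
  let F_est := trO (mulO (noisy_state e p) S) in
  let F_tilde := (1 - p) ^+ (4 * k) in
  F_est = (1 - 4%:R / 3%:R * p) ^+ (3 * k) /\
  0 <= F_tilde - F_est /\ F_tilde - F_est < 2%:R / (3 * k)%:R.
Proof.
move=> F_est F_tilde.
case: hS => [[l S_stab] [s [tau [S_pauli weight_tau]]]].
have ideal : trO (mulO (proj (graph_state C e)) S) = 1.
  rewrite trO_proj_fixed ?graph_state_normalized // S_stab.
  exact: (stab_fixes_graph_state C e_sym e_irr l).
have F_est_eq : F_est = (1 - 4%:R / 3%:R * p) ^+ (3 * k).
  move: ideal; rewrite /F_est /noisy_state S_pauli !trO_mulZr trO_depol_all weight_tau.
  by move=> ideal; rewrite mulrCA ideal mulr1.
split=> //; rewrite /F_tilde F_est_eq; exact: fidelity_gap.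
Qed.
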